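(* Let $G$ be a non-cyclic finite group of order $n$ and let $q$ be the smallest prime divisor of $n$. Then $$\psi(G)<\frac{1}{q-1}\,\psi(C_n).$$
   Context: For a finite group $G$, $\psi(G)=\sum_{g\in G} o(g)$ denotes the sum of the orders of all elements of $G$. $C_n$ denotes the cyclic group of order $n$. *)

From mathcomp Require Import all_boot all_order all_algebra all_fingroup all_solvable.
Set Implicit Arguments. Unset Strict Implicit. Unset Printing Implicit Defensive.

Definition psi (gT : finGroupType) (G : {set gT}) : nat := \sum_(x in G) #[x]%g.

(* The cyclic group C_n of order n, realized as the additive group Zp n
   inside 'Z_n (it has order n for every n >= 1). *)
Definition psiC (n : nat) : nat := psi (Zp n).

From mathcomp Require Import all_boot all_order all_algebra all_fingroup all_solvable.
From mathcomp Require Import zify.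
Set Implicit Arguments. Unset Strict Implicit. Unset Printing Implicit Defensive.
Import GRing.Theory Num.Theory GroupScope.
Local Open Scope nat_scope.

(* Induction on n = |G|, with p the largest and q the smallest prime divisor
   of n.  If every element of G has order at most n/p then
   psi(G) <= n^2/p, while psi(C_n) > n phi(n) >= (q-1) n^2/p.  Otherwise some
   cyclic subgroup <x> has index < p, so the Sylow p-subgroup P = <x_p> is
   cyclic and, by Sylow's counting theorem, normal.  As o(g) = o(g_p) o(gP),
   psi(G) splits over the cosets of P: a coset centralizing P contributes
   psi(P) o(gP), any other one at most |P|^2/p o(gP), and
   psi(C_n) = psi(C_|P|) psi(C_|G/P|).  If G/P is not cyclic, the induction
   hypothesis for G/P concludes.  If G/P is cyclic then C_G(P)/P is a proper
   subgroup of it (otherwise G would be cyclic), hence carries at most a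
   1/(q^2-q+1) share of psi(G/P), and the bound |P|^2/p on the other cosets
   wins. *)

Lemma Zp_cyclic n : cyclic (Zp n).
Proof. by rewrite /Zp; case: ifP => _; [rewrite Zp_cycle cycle_cyclic | exact: cyclic1]. Qed.

Lemma group_constt (gT : finGroupType) (G : {group gT}) (pi : nat_pred) x :
  x \in G -> x.`_pi \in G.
Proof. by move=> Gx; apply: subsetP (cycle_constt pi x); rewrite cycle_subG. Qed.

Lemma noncyclic_card_gt1 (gT : finGroupType) (G : {group gT}) : ~~ cyclic G -> 1 < #|G|.
Proof. by rewrite ltnNge; apply: contra => /card_le1_trivg ->; apply: cyclic1. Qed.

Lemma leq_pdiv_dvd m n : 1 < m -> m %| n -> pdiv n <= pdiv m.
Proof.
move=> m1 mn; apply: pdiv_min_dvd (dvdn_trans (pdiv_dvd m) mn).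
by rewrite prime_gt1 ?pdiv_prime.
Qed.

Lemma max_pdiv_partC_lt n : 1 < n -> max_pdiv n`_(max_pdiv n)^' < max_pdiv n.
Proof.
move=> n1; set p := max_pdiv n; set m := n`_p^'.
have p_pr : prime p := max_pdiv_prime n1.
have [m_le1 | m1] := leqP m 1.
  apply: leq_ltn_trans (prime_gt1 p_pr); apply: leq_trans m_le1.
  by rewrite max_pdiv_leq ?part_gt0.
have p'm : ~~ (p %| m) by rewrite -p'natE // part_pnat.
have dvd_m_n : max_pdiv m %| n := dvdn_trans (max_pdiv_dvd m) (dvdn_part _ n).
rewrite ltn_neqAle max_pdiv_max ?andbT; last first.
  by rewrite mem_primes max_pdiv_prime // (ltnW n1).
by apply: contraNneq p'm => <-; apply: max_pdiv_dvd.
Qed.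

(* phi(n)/n is the product of the (r-1)/r over the primes r of n; dropping the
   largest prime p and using induction on the p'-part telescopes it down to
   (q-1)/p. *)
Lemma totient_lower_bound n : 0 < n -> n * (pdiv n).-1 <= max_pdiv n * totient n.
Proof.
elim/ltn_ind: n => n IH n0; have [n_le1 | n1] := leqP n 1.
  by have -> : n = 1 by lia.
set p := max_pdiv n; set m := n`_p^'.
have p_pr : prime p := max_pdiv_prime n1.
have m0 : 0 < m := part_gt0 _ _.
have [b eb] : exists b, logn p n = b.+1.
  by exists (logn p n).-1; rewrite prednK // logn_gt0 mem_primes p_pr n0 max_pdiv_dvd.
have en : n = p ^ b.+1 * m by rewrite -eb -p_part partnC.
have tn : totient n = p.-1 * p ^ b * totient m.
  by rewrite {1}en totient_coprime ?totient_pfactor // -eb -p_part coprime_partC.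
have [m_le1 | m1] := leqP m 1.
  have m_eq1 : m = 1 by lia.
  rewrite tn {1 2}en m_eq1 (_ : totient 1 = 1) // muln1 pdiv_pfactor // expnS.
  by rewrite muln1 [p.-1 * _]mulnC mulnA.
have lt_mn : m < n.
  rewrite [n in _ < n]en ltn_Pmull // expnS (leq_trans (prime_gt1 p_pr)) //.
  by rewrite leq_pmulr ?expn_gt0 ?prime_gt0.
have le_qm : (pdiv n).-1 <= (pdiv m).-1.
  by rewrite -!subn1 leq_sub2r // leq_pdiv_dvd // en dvdn_mull.
have le_Mp : max_pdiv m <= p.-1 by rewrite -ltnS prednK ?prime_gt0 // max_pdiv_partC_lt.
have hm : m * (pdiv n).-1 <= p.-1 * totient m.
  apply: leq_trans (leq_mul (leqnn m) le_qm) _.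
  exact: leq_trans (IH m lt_mn (ltnW m1)) (leq_mul le_Mp (leqnn _)).
rewrite tn {1}en expnS; move: hm (p ^ b) => hm t; nia.
Qed.

Section PsiBasics.

Variable gT : finGroupType.
Implicit Types G : {group gT}.

Lemma psi_gt0 G : 0 < psi G.
Proof. by rewrite /psi (bigD1 1%g) ?group1 //= order1. Qed.

Lemma psiS (A B : {set gT}) : A \subset B -> psi A <= psi B.
Proof. by move=> sAB; rewrite /psi [X in _ <= X](big_setID A) /= (setIidPr sAB) leq_addr. Qed.

Lemma psi_le_sq G : psi G <= #|G| * #|G|.
Proof.
rewrite /psi -sum_nat_const leq_sum // => x Gx.
exact: dvdn_leq (cardG_gt0 G) (order_dvdG Gx).
Qed.

Lemma psi_isog (rT : finGroupType) G (K : {group rT}) : G \isog K -> psi G = psi K.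
Proof.
case/isogP=> f injf <-; rewrite /psi morphimEdom big_imset /=.
  by apply: eq_bigr => x Gx; rewrite order_injm.
by move=> x y Gx Gy; apply: (injmP injf).
Qed.

Lemma psi_cyclic G : cyclic G -> psi G = psiC #|G|.
Proof.
move=> cycG; apply: psi_isog.
by rewrite isog_cyclic_card ?Zp_cyclic // card_Zp ?cardG_gt0 /=.
Qed.

Lemma totient_lt_psi_cyclic G : cyclic G -> 1 < #|G| -> #|G| * totient #|G| < psi G.
Proof.
case/cyclicP=> a ->{G}; rewrite -orderE => a1.
rewrite totient_gen /psi (big_setID [set x | generator <[a]> x]) /= -addn1 leq_add //.
  rewrite mulnC -sum_nat_const (setIidPr _); last first.
    by apply/subsetP=> x; rewrite inE => /eqP ->; apply: cycle_id.
  by apply: eq_leq; apply: eq_bigr => x; rewrite inE => /eqP gx; rewrite !orderE gx.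
have nG1 : 1%g \in <[a]> :\: [set x | generator <[a]> x].
  by rewrite !inE group1 andbT /generator cycle1 trivg_card1 -orderE gtn_eqF.
by rewrite (bigD1 1%g) //= order1.
Qed.

End PsiBasics.

Lemma psiC_gt0 n : 0 < psiC n.
Proof. exact: psi_gt0. Qed.

Lemma psiC_le_sq n : 0 < n -> psiC n <= n * n.
Proof. by move=> n0; have := psi_le_sq (Zp_group n); rewrite card_Zp. Qed.

Lemma psiC_dvd d m : 0 < m -> d %| m -> psiC d <= psiC m.
Proof.
move=> m0 dm; have [a defZ] := cyclicP (Zp_cyclic m).
have oa : #[a] = m by rewrite orderE -defZ card_Zp.
have d0 : 0 < d := dvdn_gt0 m0 dm.
have oad : #[a ^+ (m %/ d)] = d.
  by rewrite orderXdiv oa ?dvdn_div // -{1}(divnK dm) mulKn // divn_gt0 // dvdn_leq.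
rewrite -oad orderE -psi_cyclic ?cycle_cyclic //.
by apply: psiS; rewrite defZ cycleX.
Qed.

Lemma totient_lt_psiC n : 1 < n -> n * totient n < psiC n.
Proof.
move=> n1; have := totient_lt_psi_cyclic (Zp_cyclic n).
by rewrite card_Zp ?(ltnW n1) //; apply.
Qed.

Lemma pgroup_cycle_eqVsmall (gT : finGroupType) (P : {group gT}) p w :
  prime p -> p.-group P -> w \in P -> <[w]> = P \/ #[w] <= #|P| %/ p.
Proof.
move=> p_pr pP Pw; have := order_dvdG Pw; rewrite (card_pgroup pP).
case/(dvdn_pfactor _ _ p_pr)=> c le_c ow.
have [ec | ne_c] := eqVneq c (logn p #|P|).
  by left; apply/eqP; rewrite eqEcard cycle_subG Pw -orderE ow ec -(card_pgroup pP) /=.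
right; rewrite ow; case: (logn p #|P|) le_c ne_c => [|b]; first by rewrite leqn0 => /eqP->.
rewrite expnS mulKn ?prime_gt0 // leq_exp2l ?prime_gt1 //; lia.
Qed.

Section NormalSylow.

Variables (gT : finGroupType) (G P : {group gT}) (p : nat).
Hypotheses (sylP : p.-Sylow(G) P) (nPG : P <| G).

Lemma mem_normal_Sylow_constt g : g \in G -> g.`_p \in P.
Proof. by move=> Gg; rewrite (mem_normal_Hall sylP nPG) ?group_constt ?p_elt_constt. Qed.

Lemma coset_constt g : g \in G -> coset P g = coset P g.`_p^'.
Proof.
move=> Gg; have nPG' := subsetP (normal_norm nPG).
rewrite -[in LHS](consttC p g) morphM ?nPG' ?group_constt //=.
by rewrite coset_id ?mul1g // mem_normal_Sylow_constt.
Qed.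

Lemma order_coset_p'elt h : h \in G -> p^'.-elt h -> #[coset P h] = #[h].
Proof.
move=> Gh p'h; have Nh : h \in 'N(P) := subsetP (normal_norm nPG) h Gh.
apply/eqP; rewrite eqn_dvd morph_order // order_dvdn.
have Ph : h ^+ #[coset P h] \in P.
  by apply: coset_idr; rewrite ?groupX // morphX // expg_order.
move/constt1P: p'h => hp1.
by rewrite -(constt_p_elt (mem_p_elt (pHall_pgroup sylP) Ph)) consttX hp1 expg1n eqxx.
Qed.

Lemma order_constt_coset g : g \in G -> #[g] = #[g.`_p] * #[coset P g].
Proof.
move=> Gg; rewrite coset_constt // order_coset_p'elt ?group_constt ?p_elt_constt //.
by rewrite !order_constt partnC.
Qed.

Lemma coset_fiber g0 : g0 \in G -> [set g in G | coset P g == coset P g0] = P :* g0.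
Proof.
move=> Gg0; have nPG' := subsetP (normal_norm nPG).
apply/setP => g; rewrite inE; apply/andP/idP => [[Gg /eqP]|Pg].
  by move/rcoset_kercosetP; apply; apply: nPG'.
have Gg : g \in G.
  move: Pg; rewrite mem_rcoset => /(subsetP (normal_sub nPG)) Pgg0.
  by rewrite -(mulgKV g0 g) groupM.
by split=> //; apply/eqP/rcoset_kercosetP => //; apply: nPG'.
Qed.

Lemma psi_coset_fibers :
  psi G = \sum_(Y in G / P) (\sum_(g in G | coset P g == Y) #[g.`_p]) * #[Y].
Proof.
rewrite /psi (eq_bigr (fun g => #[g.`_p] * #[coset P g])) => [|g]; last first.
  exact: order_constt_coset.
rewrite (partition_big (coset P) (mem (G / P))) => [|g Gg]; last exact: mem_quotient.
apply: eq_bigr => Y _; rewrite big_distrl /=.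
by apply: eq_bigr => g /andP[_ /eqP ->].
Qed.

Lemma fiber_psi_cent g0 : g0 \in 'C_G(P) ->
  \sum_(g in G | coset P g == coset P g0) #[g.`_p] = psi P.
Proof.
move=> CPg0; have Gg0 : g0 \in G by case/setIP: CPg0.
have /setIP[Gh cPh] : g0.`_p^' \in 'C_G(P) by apply: group_constt.
rewrite coset_constt // (eq_bigl (fun g => g \in P :* g0.`_p^')) => [|g]; last first.
  by rewrite -coset_fiber // inE.
rewrite -rcosetE /rcoset big_imset /= => [|x y _ _]; last exact: mulIg.
apply: eq_bigr => u Pu; rewrite consttM; last by apply/esym; apply: (centP cPh).
move/constt1P: (p_elt_constt p^' g0) => hp1.
by rewrite constt_p_elt ?(mem_p_elt (pHall_pgroup sylP)) // hp1 mulg1.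
Qed.

Lemma card_quotient_Sylow : #|G / P| = #|G|`_p^'.
Proof.
rewrite card_quotient ?normal_norm //.
apply/eqP; rewrite -(eqn_pmul2l (part_gt0 p #|G|)) -(card_Hall sylP).
by rewrite Lagrange ?(pHall_sub sylP) // (card_Hall sylP) partnC.
Qed.

Lemma psi_cent_Sylow : G \subset 'C(P) -> psi G = psi P * psi (G / P).
Proof.
move=> cGP; rewrite psi_coset_fibers /psi big_distrr /=.
apply: eq_bigr => _ /morphimP[g0 _ Gg0 ->].
by rewrite fiber_psi_cent ?inE ?Gg0 ?(subsetP cGP) // mulnC.
Qed.

Lemma cyclic_cent_Sylow : cyclic P -> cyclic (G / P) -> G \subset 'C(P) -> cyclic G.
Proof.
move=> cycP /cyclicP[Y defQ] cGP.
have /morphimP[y _ Gy eY] : Y \in G / P by rewrite defQ cycle_id.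
set h := y.`_p^'; have Gh : h \in G by apply: group_constt.
have oh : #[h] = #|G|`_p^'.
  rewrite -order_coset_p'elt ?p_elt_constt // -coset_constt //.
  by rewrite -card_quotient_Sylow defQ orderE eY.
have coPh : coprime #|P| #|<[h]>| by rewrite (card_Hall sylP) -orderE oh coprime_partC.
have eG : (P * <[h]>)%g = G.
  apply/eqP; rewrite eqEcard mulG_subG (pHall_sub sylP) cycle_subG Gh.
  by rewrite TI_cardMg ?coprime_TIg // (card_Hall sylP) -orderE oh partnC ?leqnn ?cardG_gt0.
rewrite -eG cyclicM ?cycle_cyclic //.
by apply: subset_trans cGP; rewrite cycle_subG.
Qed.

Hypotheses (p_pr : prime p) (cycP : cyclic P).

Lemma fiber_noncent_bound g0 : g0 \in G -> coset P g0 \notin 'C_G(P) / P ->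
  \sum_(g in G | coset P g == coset P g0) #[g.`_p] <= #|P| * (#|P| %/ p).
Proof.
move=> Gg0 nCg0; rewrite (eq_bigl (fun g => g \in P :* g0)) => [|g]; last first.
  by rewrite -coset_fiber // inE.
rewrite -{1}(card_rcoset P g0) -sum_nat_const leq_sum // => g.
rewrite -coset_fiber // inE => /andP[Gg /eqP eq_g].
have Pgp := mem_normal_Sylow_constt Gg.
have [gen_gp | //] := pgroup_cycle_eqVsmall p_pr (pHall_pgroup sylP) Pgp.
(* If g_p generated P, then g = g_p g_p' would centralize P. *)
have cPg : g \in 'C(P).
  have cgp : g.`_p^' \in 'C(<[g.`_p]>).
    by rewrite cent_cycle; apply/cent1P; rewrite /constt; apply: commuteX2.
  rewrite -(consttC p g) groupM //; last by rewrite -gen_gp.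
  exact: subsetP (cyclic_abelian cycP) _ Pgp.
by case/negP: nCg0; rewrite -eq_g mem_quotient // inE Gg.
Qed.

Lemma psi_cyclic_Sylow_bound :
  psi G + #|P| * (#|P| %/ p) * psi ('C_G(P) / P)
    <= psi P * psi ('C_G(P) / P) + #|P| * (#|P| %/ p) * psi (G / P).
Proof.
set X := #|P| * _; set C := 'C_G(P) / P.
have sCQ : C \subset G / P by apply/quotientS/subsetIl.
set F := fun Y => \sum_(g in G | coset P g == Y) #[g.`_p].
have eT : psi (G / P) = psi C + \sum_(Y in G / P :\: C) #[Y].
  by rewrite /psi (big_setID C) (setIidPr sCQ).
have eG : psi G = psi P * psi C + \sum_(Y in G / P :\: C) F Y * #[Y].
  rewrite psi_coset_fibers (big_setID C) (setIidPr sCQ); congr (_ + _).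
  rewrite /psi big_distrr; apply: eq_bigr => _ /morphimP[g0 _ Cg0 ->].
  by rewrite /F fiber_psi_cent // mulnC.
have : \sum_(Y in G / P :\: C) F Y * #[Y] <= X * \sum_(Y in G / P :\: C) #[Y].
  rewrite big_distrr leq_sum // => _ /setDP[/morphimP[g0 _ Gg0 ->] nCg0].
  by apply: leq_mul => //; apply: fiber_noncent_bound.
by rewrite eG eT; lia.
Qed.

End NormalSylow.

Lemma psiC_part n p : 0 < n -> prime p -> psiC n = psiC n`_p * psiC n`_p^'.
Proof.
move=> n0 p_pr; have [P sylP] := Sylow_exists p (Zp n).
have cycZ := Zp_cyclic n; have abZ := cyclic_abelian cycZ.
have nPZ : P <| Zp n by rewrite -sub_abelian_normal ?(pHall_sub sylP).
rewrite {1}/psiC (psi_cent_Sylow sylP nPZ) ?sub_abelian_cent ?(pHall_sub sylP) //.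
rewrite !psi_cyclic ?quotient_cyclic ?(cyclicS (pHall_sub sylP)) //.
by rewrite (card_quotient_Sylow sylP nPZ) (card_Hall sylP) card_Zp.
Qed.

(* An element outside the subgroup of order r^b has order r^(b+1), since the
   subgroups of a cyclic group are determined by their orders. *)
Lemma psiC_expS r b : prime r ->
  psiC (r ^ b.+1) = psiC (r ^ b) + (r ^ b.+1 - r ^ b) * r ^ b.+1.
Proof.
move=> r_pr; have rb0 : 0 < r ^ b.+1 by rewrite expn_gt0 prime_gt0.
have [a defZ] := cyclicP (Zp_cyclic (r ^ b.+1)).
have oa : #[a] = r ^ b.+1 by rewrite orderE -defZ card_Zp.
set K := <[a ^+ r]>.
have oK : #|K| = r ^ b.
  by rewrite -orderE orderXdiv oa expnS ?dvdn_mulr // mulKn ?prime_gt0.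
have sKZ : K \subset Zp (r ^ b.+1) by rewrite defZ cycleX.
rewrite -{1}oK -(psi_cyclic (cycle_cyclic _)) /psiC /psi (big_setID K) /= (setIidPr sKZ).
have cardD : #|Zp (r ^ b.+1) :\: K| = r ^ b.+1 - r ^ b.
  by rewrite cardsD (setIidPr sKZ) oK card_Zp.
congr (_ + _); rewrite -cardD -sum_nat_const; apply: eq_bigr => x /setDP[Zx nKx].
have := order_dvdG Zx; rewrite card_Zp // => /(dvdn_pfactor _ _ r_pr)[c le_c oc].
rewrite oc; congr (r ^ _); apply/eqP; apply: contraR nKx => ne_c.
rewrite -cycle_subG -(cardSg_cyclic (Zp_cyclic (r ^ b.+1))) ?sKZ ?cycle_subG //.
by rewrite -orderE oc oK; apply/(dvdn_pfactor _ _ r_pr); exists c => //; lia.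
Qed.

Lemma psiC_expS_ge r b : prime r -> (r * (r - 1) + 1) * psiC (r ^ b) <= psiC (r ^ b.+1).
Proof.
move=> r_pr; have := @psiC_le_sq (r ^ b).
rewrite expn_gt0 prime_gt0 // psiC_expS // expnS => /(_ isT).
move: (psiC (r ^ b)) (r ^ b) => S t le_S.
have := leq_mul (leqnn (r * (r - 1))) le_S; nia.
Qed.

Lemma psiC_expS_lb r b : prime r -> (r - 1) * (r ^ b.+1 * r ^ b) + 1 <= psiC (r ^ b.+1).
Proof.
move=> r_pr; have := psiC_gt0 (r ^ b); rewrite psiC_expS // expnS.
by move: (psiC (r ^ b)) (r ^ b) => S t S0; nia.
Qed.

(* With r the least prime factor of m/d, d divides m/r, and passing from m/r to
   m raises the r-part, which multiplies psi(C_.) by at least r^2-r+1. *)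
Lemma psiC_proper_dvd q d m : 0 < m -> d %| m -> d != m -> q <= pdiv m ->
  (q * (q - 1) + 1) * psiC d <= psiC m.
Proof.
move=> m0 dm ndm qm; have d0 := dvdn_gt0 m0 dm.
have k1 : 1 < m %/ d.
  rewrite ltn_neqAle divn_gt0 // dvdn_leq // andbT.
  by apply: contraNneq ndm => k1; rewrite -(divnK dm) -k1 mul1n.
set r := pdiv (m %/ d); have r_pr : prime r := pdiv_prime k1.
have rm : r %| m := dvdn_trans (pdiv_dvd _) (dvdn_div dm).
have qr : q <= r := leq_trans qm (leq_pdiv_dvd k1 (dvdn_div dm)).
set m1 := m %/ r; have em : m = r * m1 by rewrite mulnC divnK.
have m1_0 : 0 < m1 by rewrite divn_gt0 ?prime_gt0 // dvdn_leq.
have dm1 : d %| m1.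
  rewrite dvdn_divRL // -[m in _ %| m](divnK dm) mulnC.
  exact: dvdn_mul (pdiv_dvd _) (dvdnn d).
have em_r : m`_r = r ^ (logn r m1).+1.
  by rewrite em (partnM _ (prime_gt0 r_pr) m1_0) part_pnat_id ?pnat_id // p_part expnS.
have em_r' : m`_r^' = m1`_r^'.
  by rewrite em (partnM _ (prime_gt0 r_pr) m1_0) part_p'nat ?mul1n // pnatNK pnat_id.
have le_d : psiC d <= psiC (r ^ logn r m1) * psiC m1`_r^'.
  by rewrite -p_part -psiC_part //; apply: psiC_dvd.
rewrite (psiC_part m0 r_pr) em_r em_r'.
apply: leq_trans (leq_mul (leqnn _) le_d) _; rewrite mulnA leq_mul2r; apply/orP; right.
apply: leq_trans (psiC_expS_ge _ r_pr); rewrite leq_mul2r leq_add2r; apply/orP; right.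
exact: leq_mul qr (leq_sub2r 1 qr).
Qed.

(* g, X, Ps, A, T stand for psi(G), |P|^2/p, psi(P), psi(C_G(P)/P), psi(G/P). *)
Lemma cyclic_quotient_arith q p g X Ps A T : 1 < q -> q < p ->
  g + X * A <= Ps * A + X * T -> (p - 1) * X + 1 <= Ps ->
  (q * (q - 1) + 1) * A <= T -> 0 < T -> (q - 1) * g < Ps * T.
Proof.
case: q => // s s0 qp hg hPs hA T0; rewrite subn1 /= in hA *.
have [D eT] : exists D, T = s * A + D by exists (T - s * A); nia.
subst T; have hD : (s * s + 1) * A <= D by nia.
have D0 : 0 < D by nia.
have hPsD : (s.+1 * X + 1) * D <= Ps * D by apply: leq_mul => //; nia.
have hXD : X * ((s * s + 1) * A) <= X * D by apply: leq_mul.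
have hsg : s * (g + X * A) <= s * (Ps * A + X * (s * A + D)) by apply: leq_mul.
nia.
Qed.

Section CyclicNormalSylow.

Variables (gT : finGroupType) (G P : {group gT}) (p : nat).
Hypotheses (p_pr : prime p) (sylP : p.-Sylow(G) P) (nPG : P <| G) (cycP : cyclic P).

Lemma psiC_card_Sylow : psiC #|G| = psi P * psiC #|G / P|.
Proof.
by rewrite (card_quotient_Sylow sylP nPG) psi_cyclic // (card_Hall sylP) -psiC_part.
Qed.

Lemma psi_Sylow_lb : (p - 1) * (#|P| * (#|P| %/ p)) + 1 <= psi P.
Proof.
rewrite psi_cyclic // (card_Hall sylP) p_part.
case: (logn p #|G|) => [|b]; first by rewrite divn_small ?prime_gt1 // !muln0 psiC_gt0.
by rewrite {2}expnS mulKn ?prime_gt0 // psiC_expS_lb.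
Qed.

Lemma psi_le_Sylow_quotient : psi G <= psi P * psi (G / P).
Proof.
have := psi_cyclic_Sylow_bound sylP nPG p_pr cycP.
have := psiS (quotientS P (subsetIl G 'C(P))); have := psi_Sylow_lb.
move: (#|P| * _) (psi P) (psi ('C_G(P) / P)) (psi (G / P)) => X Ps A T hPs hA.
have hX : X <= Ps by have := prime_gt1 p_pr; nia.
by nia.
Qed.

Hypothesis Q1 : 1 < #|G / P|.

Lemma noncyclic_quotient_step :
  (pdiv #|G / P|).-1 * psi (G / P) < psiC #|G / P| ->
  (pdiv #|G|).-1 * psi G < psiC #|G|.
Proof.
move=> IH_Q; rewrite psiC_card_Sylow.
have le_q : (pdiv #|G|).-1 <= (pdiv #|G / P|).-1.
  by rewrite -!subn1 leq_sub2r ?leq_pdiv_dvd ?dvdn_quotient.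
apply: leq_ltn_trans (leq_mul le_q psi_le_Sylow_quotient) _.
by rewrite mulnCA ltn_pmul2l ?psi_gt0.
Qed.

Lemma cyclic_quotient_step : pdiv #|G| < p -> ~~ cyclic G -> cyclic (G / P) ->
  (pdiv #|G|).-1 * psi G < psiC #|G|.
Proof.
move=> qp ncycG cycQ; set q := pdiv #|G|; set C := 'C_G(P) / P.
have sCQ : C \subset G / P by apply/quotientS/subsetIl.
have ncGP : ~~ (G \subset 'C(P)).
  by apply: contra ncycG; apply: cyclic_cent_Sylow sylP nPG cycP cycQ.
have ltCQ : #|C| != #|G / P|.
  apply: contra ncGP => /eqP eCQ.
  have sPC : P \subset 'C_G(P) by rewrite subsetI (pHall_sub sylP); apply: cyclic_abelian.
  have: G / P \subset C by rewrite -(eqP (_ : C == G / P)) // eqEcard sCQ eCQ /=.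
  by rewrite quotientSGK ?normal_norm // => /subset_trans; apply; apply: subsetIr.
have hA : (q * (q - 1) + 1) * psi C <= psi (G / P).
  rewrite (psi_cyclic cycQ) (psi_cyclic (cyclicS sCQ cycQ)).
  by rewrite psiC_proper_dvd ?cardG_gt0 ?cardSg // leq_pdiv_dvd ?dvdn_quotient.
rewrite psiC_card_Sylow -(psi_cyclic cycQ) -subn1.
apply: cyclic_quotient_arith qp (psi_cyclic_Sylow_bound sylP nPG p_pr cycP) _ hA (psi_gt0 _).
  apply/prime_gt1/pdiv_prime.
  exact: leq_trans Q1 (dvdn_leq (cardG_gt0 G) (dvdn_quotient _ _)).
exact: psi_Sylow_lb.
Qed.

End CyclicNormalSylow.

(* <x> normalizes <x_p>, so the number of Sylow p-subgroups divides
   |G : <x>| < p; being 1 mod p, it is 1. *)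
Lemma large_element_normal_Sylow (gT : finGroupType) (G : {group gT}) x p :
  prime p -> x \in G -> #|G| < #[x] * p ->
  p.-Sylow(G) <[x.`_p]> /\ <[x.`_p]> <| G.
Proof.
move=> p_pr Gx ltGx; set k := #|G : <[x]>|.
have sxG : <[x]> \subset G by rewrite cycle_subG.
have eG : #|G| = #[x] * k by rewrite -(Lagrange sxG) orderE.
have lt_kp : k < p by rewrite -(ltn_pmul2l (order_gt0 x)) -eG.
have p'k : p^'.-nat k by rewrite p'natE // gtnNdvd ?indexg_gt0.
have sylP : p.-Sylow(G) <[x.`_p]>.
  rewrite pHallE cycle_subG group_constt //= -orderE order_constt eG.
  by rewrite (partnM _ (order_gt0 x) (indexg_gt0 _ _)) (part_p'nat p'k) muln1.
split=> //; rewrite /normal (pHall_sub sylP) /=.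
have nPx : <[x]> \subset 'N_G(<[x.`_p]>).
  by rewrite subsetI sxG sub_abelian_norm ?cycle_abelian ?cycle_subG ?cycle_constt.
have nSyl1 : #|'Syl_p(G)| = 1.
  have := card_Syl_mod G p_pr; rewrite modn_small // (leq_ltn_trans _ lt_kp) //.
  by apply: dvdn_leq; rewrite ?indexg_gt0 // (card_Syl sylP) indexgS.
move/eqP: nSyl1; rewrite (card_Syl sylP) indexg_eq1 => sGN.
exact: subset_trans sGN (subsetIr _ _).
Qed.

Lemma psi_small_elements (gT : finGroupType) (G : {group gT}) :
  1 < #|G| -> (forall x, x \in G -> #[x] * max_pdiv #|G| <= #|G|) ->
  (pdiv #|G|).-1 * psi G < psiC #|G|.
Proof.
move=> G1 small; have p0 := max_pdiv_gt0 #|G|.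
have hsum : psi G * max_pdiv #|G| <= #|G| * #|G|.
  by rewrite /psi big_distrl -sum_nat_const leq_sum.
have := totient_lower_bound (cardG_gt0 G); have := totient_lt_psiC G1.
rewrite -(ltn_pmul2l p0); move: hsum.
by move: (psi G) (#|G|) (max_pdiv _) (pdiv _) (totient _) (psiC _) => g n p q t C; nia.
Qed.

Lemma psi_noncyclic_lt n (gT : finGroupType) (G : {group gT}) :
  #|G| = n -> ~~ cyclic G -> (pdiv n).-1 * psi G < psiC n.
Proof.
elim/ltn_ind: n gT G => n IH gT G nG ncycG; subst n.
have G1 := noncyclic_card_gt1 ncycG.
set p := max_pdiv #|G|; have p_pr : prime p := max_pdiv_prime G1.
have [/exists_inP[x Gx ltGx] | small] := boolP [exists x in G, #|G| < #[x] * p]; last first.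
  apply: psi_small_elements => // x Gx; rewrite leqNgt.
  by apply: contra small => ?; apply/exists_inP; exists x.
have [sylP nPG] := large_element_normal_Sylow p_pr Gx ltGx.
have cycP : cyclic <[x.`_p]> := cycle_cyclic _.
have eQ := card_quotient_Sylow sylP nPG.
have Q1 : 1 < #|G / <[x.`_p]>|.
  rewrite ltnNge; apply: contra ncycG => Q_le1.
  suff <- : <[x.`_p]> = G :> {set gT} by [].
  have p'_le1 : #|G|`_p^' <= 1 by rewrite -eQ.
  apply/eqP; rewrite eqEcard (pHall_sub sylP) (card_Hall sylP) /=.
  by rewrite -{1}(partnC p (cardG_gt0 G)) -[leqRHS]muln1 leq_mul2l p'_le1 orbT.
have qp : pdiv #|G| < p.
  apply: leq_ltn_trans (max_pdiv_partC_lt G1); rewrite -/p -eQ.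
  apply: leq_trans (leq_pdiv_dvd Q1 (dvdn_quotient _ _)) _.
  by rewrite max_pdiv_max // pi_pdiv.
have [cycQ | ncycQ] := boolP (cyclic (G / <[x.`_p]>)).
  exact: cyclic_quotient_step p_pr sylP nPG cycP Q1 qp ncycG cycQ.
apply: (noncyclic_quotient_step p_pr sylP nPG cycP Q1).
apply: IH _ _ _ (G / _)%G erefl ncycQ.
have P1 : (<[x.`_p]> :!=: 1)%g by rewrite -cardG_gt1 (card_Hall sylP) p_part_gt1 pi_max_pdiv.
by rewrite ltn_quotient // cycle_subG group_constt.
Qed.


Theorem theorem3 (gT : finGroupType) (G : {group gT}) :
  ~~ cyclic G ->
  ((psi G)%:R < (1 / ((pdiv #|G|)%:R - 1)) * (psiC #|G|)%:R :> rat)%R.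
Proof.
move=> ncycG; have lt_psi := psi_noncyclic_lt erefl ncycG.
have q1 : 1 < pdiv #|G| by rewrite prime_gt1 ?pdiv_prime ?noncyclic_card_gt1.
have q1_pos : (0 < (pdiv #|G|)%:R - 1 :> rat)%R by rewrite subr_gt0 ltr1n.
rewrite div1r mulrC ltr_pdivlMr // -(natrB _ (ltnW q1)) -natrM ltr_nat.
by rewrite mulnC subn1.
Qed.
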